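(* Let $C\subseteq\mathbb{R}^n$ be a nonempty compact convex set and let $f:\mathbb{R}^n\to\mathbb{R}$ be an abs-smooth function that is convex on $C$, with curvature constant $\mathcal{C}_f$ on $C$. Let $\alpha_t\in(0,1]$, $x_t\in C$, $\epsilon\ge0$, and let $v_t\in C$ satisfy $$\Delta f(x_t;\alpha_t(v_t-x_t)) \le \min_{w\in C}\Delta f(x_t;\alpha_t(w-x_t)) + \tfrac12\epsilon\alpha_t^2\,\mathcal{C}_f .$$ Then for $x_{t+1}=x_t+\alpha_t(v_t-x_t)$, $$f(x_{t+1}) \le f(x_t)-\alpha_t\, g(x_t) + \frac{\alpha_t^2}{2}\mathcal{C}_f(1+\epsilon),$$ where $g(x_t)=\max_{v\in C}\frac{-\Delta f(x_t;\alpha_t(v-x_t))}{\alpha_t}$.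
   Context: A function $f:\mathbb{R}^n\to\mathbb{R}$ is abs-smooth if it is locally Lipschitz and admits an abs-smooth form: for some $s\in\mathbb{N}\cup\{0\}$ there are $F=(F_1,\dots,F_s)\in\mathcal{C}^d(\mathbb{R}^{n+s+s},\mathbb{R}^s)$ and $\varphi\in\mathcal{C}^d(\mathbb{R}^{n+s},\mathbb{R})$ with $d\ge1$ such that $y=f(x)$ is computed by $z_i=F_i(x,z_1,\dots,z_{i-1},|z_1|,\dots,|z_{i-1}|)$ for $i=1,\dots,s$ and $y=\varphi(x,z)$. For a point $\mathring{x}$, write $\mathring z=z(\mathring x)$ and let $Z=\partial_x F$, $M=\partial_z F$, $L=\partial_{|z|}F$ (evaluated at $(\mathring x,\mathring z,|\mathring z|)$; $M,L$ strictly lower triangular), $a=\partial_x\varphi$, $b=\partial_z\varphi$ (evaluated at $(\mathring x,\mathring z)$). The piecewise linearization of $f$ at $\mathring x$ is $f_{PL,\mathring x}(x)=d_0+a^Tx+b^Tz$ where $z$ solves $z=c+Zx+Mz+L|z|$, with constants $c,d_0$ chosen so that $f_{PL,\mathring x}(\mathring x)=f(\mathring x)$ (namely $c=\mathring z-Z\mathring x-M\mathring z-L|\mathring z|$, $d_0=f(\mathring x)-a^T\mathring x-b^T\mathring z$). The abs-linearization is $\Delta f(\mathring x;x-\mathring x):=f_{PL,\mathring x}(x)-f(\mathring x)$. The curvature constant of $f$ on $C$ is $$\mathcal{C}_f:=\sup_{x,v\in C,\ \alpha\in(0,1],\ y=x+\alpha(v-x)}\frac{2}{\alpha^2}\big|f(y)-f(x)-\Delta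 f(x;y-x)\big|,$$ which is finite for compact $C$. *)

From HB Require Import structures.
From mathcomp Require Import all_boot all_order all_algebra.
From mathcomp Require Import all_classical all_reals all_analysis.
Set Implicit Arguments. Unset Strict Implicit. Unset Printing Implicit Defensive.
Import Order.TTheory GRing.Theory Num.Theory.
Import numFieldNormedType.Exports.
Local Open Scope classical_set_scope.
Local Open Scope ring_scope.

Section AbsSmooth.
Variables (R : realType) (n s : nat).

Definition absv (z : 'rV[R]_s) : 'rV[R]_s := map_mx (fun t : R => `|t|) z.

Definition xzw (x : 'rV[R]_n) (z w : 'rV[R]_s) : 'rV[R]_(n + s + s) :=
  row_mx (row_mx x z) w.

(* Evaluation of the switching vector of the recursion
     z_i = G_i(x, z_1..z_{i-1}, |z_1|..|z_{i-1}|),  i = 1..s.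
   When G_i depends only on x and on z_j, |z_j| with j < i, after k
   iterations starting from 0 the first k components are the ones produced
   by the recursion, so s iterations compute z exactly. *)
Definition zeval (G : 'rV[R]_(n + s + s) -> 'rV[R]_s) (x : 'rV[R]_n) : 'rV[R]_s :=
  iter s (fun z => G (xzw x z (absv z))) 0.

Definition C1 (m k : nat) (g : 'rV[R]_m -> 'rV[R]_k) : Prop :=
  (forall p, differentiable g p) /\ (forall v, continuous (fun p => 'd g p v)).
Definition C1s (m : nat) (g : 'rV[R]_m -> R) : Prop :=
  (forall p, differentiable g p) /\ (forall v, continuous (fun p => 'd g p v)).

Definition locally_lipschitz (m : nat) (g : 'rV[R]_m -> R) : Prop :=
  forall x : 'rV[R]_m, exists2 r : R, 0 < r & exists k : R,
    forall y z, ball x r y -> ball x r z -> `|g y - g z| <= k * `|y - z|.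

Definition abs_smooth_form (f : 'rV[R]_n -> R)
  (F : 'rV[R]_(n + s + s) -> 'rV[R]_s) (phi : 'rV[R]_(n + s) -> R) : Prop :=
  [/\ locally_lipschitz f, C1 F, C1s phi,
      (forall (x : 'rV[R]_n) (z w z' w' : 'rV[R]_s) (i : 'I_s),
         (forall j : 'I_s, (j < i)%N -> z 0 j = z' 0 j /\ w 0 j = w' 0 j) ->
         F (xzw x z w) 0 i = F (xzw x z' w') 0 i) &
      (forall x, f x = phi (row_mx x (zeval F x)))].

(* Abs-linearization  Delta f(x0; h) = f_PL,x0 (x0 + h) - f(x0). *)
Definition absLin (F : 'rV[R]_(n + s + s) -> 'rV[R]_s) (phi : 'rV[R]_(n + s) -> R)
  (f : 'rV[R]_n -> R) (x0 h : 'rV[R]_n) : R :=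
  let z0 := zeval F x0 in
  let p0 := xzw x0 z0 (absv z0) in
  let q0 := row_mx x0 z0 in
  (* Z x + M z + L |z|  = 'd F p0 (x, z, |z|) ;  a^T x + b^T z = 'd phi q0 (x, z) *)
  let DF := 'd F p0 in
  let Dphi := 'd phi q0 in
  let c := z0 - DF p0 in
  let d0 := f x0 - Dphi q0 in
  let x := x0 + h in
  let z := zeval (fun p => c + DF p) x in
  (d0 + Dphi (row_mx x z)) - f x0.

Definition curv_set F phi f (C : set 'rV[R]_n) : set R :=
  [set r | exists x v (a : R), [/\ C x, C v, 0 < a <= 1 &
     r = 2 / a ^+ 2 * `|f (x + a *: (v - x)) - f x
                          - absLin F phi f x (a *: (v - x))| ] ].

Definition curvature_constant F phi f (C : set 'rV[R]_n) : R :=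
  sup (curv_set F phi f C).

Definition convex_set_rV (C : set 'rV[R]_n) : Prop :=
  forall x y (t : R), C x -> C y -> 0 <= t <= 1 -> C (x + t *: (y - x)).

Definition convex_on (f : 'rV[R]_n -> R) (C : set 'rV[R]_n) : Prop :=
  forall x y (t : R), C x -> C y -> 0 <= t <= 1 ->
    f (x + t *: (y - x)) <= f x + t * (f y - f x).

End AbsSmooth.

From HB Require Import structures.
From mathcomp Require Import all_boot all_order all_algebra.
From mathcomp Require Import all_classical all_reals all_analysis.
From mathcomp Require Import lra.
Import Order.TTheory GRing.Theory Num.Theory.
Import numFieldNormedType.Exports.
Local Open Scope classical_set_scope.
Local Open Scope ring_scope.

(* The remainder f(x + a(v - x)) - f(x) - Delta f(x; a(v - x)) is at most
   a^2 C_f / 2, because 2/a^2 times its absolute value belongs to the set whose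
   supremum is C_f.  Since inf E = - sup (-E) and sup commutes with positive
   scaling, the infimum of Delta f(x_t; a(w - x_t)) over w in C is - a g(x_t);
   adding the near-optimality of v_t gives the descent estimate. *)

Lemma sup_image_scaler {R : realType} (a : R) (E : set R) : 0 < a ->
  sup [set a * x | x in E] = a * sup E.
Proof.
move=> a_gt0.
have [supE|nosupE] := pselect (has_sup E).
- have supaE : has_sup [set a * x | x in E].
    case: supE => [[x0 Ex0] [M ubM]]; split; first by exists (a * x0), x0.
    by exists (a * M) => _ [x Ex <-]; rewrite ler_pM2l // ubM.
  apply/eqP; rewrite eq_le; apply/andP; split.
  + apply: ge_sup; first by case: supaE.
    by move=> _ [x Ex <-]; rewrite ler_pM2l //; exact: sup_upper_bound.
  + rewrite -ler_pdivlMl //; apply: ge_sup; first by case: supE.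
    by move=> x Ex; rewrite ler_pdivlMl //; apply: sup_upper_bound => //; exists x.
- have nosupaE : ~ has_sup [set a * x | x in E].
    case=> [[_ [x0 Ex0 _]] [M ubM]]; apply: nosupE; split; first by exists x0.
    by exists (M / a) => x Ex; rewrite ler_pdivlMr // mulrC; apply: ubM; exists x.
  by rewrite !sup_out // mulr0.
Qed.

Lemma inf_image_scaledE {R : realType} {T : Type} (A : set T) (D : T -> R) (a : R) :
  0 < a -> inf [set D w | w in A] = - (a * sup [set - D w / a | w in A]).
Proof.
move=> a_gt0; rewrite -sup_image_scaler // /inf !image_comp.
congr (- sup _); apply: eq_imagel => w _ /=.
by rewrite mulrCA mulfV ?gt_eqF // mulr1.
Qed.

Lemma absLin_remainder_le_curvature {R : realType} {n s : nat}
  {F : 'rV[R]_(n + s + s) -> 'rV[R]_s} {phi : 'rV[R]_(n + s) -> R}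
  {f : 'rV[R]_n -> R} {C : set 'rV[R]_n} {x v : 'rV[R]_n} {a : R} :
  has_ubound (curv_set F phi f C) -> C x -> C v -> 0 < a <= 1 ->
  f (x + a *: (v - x)) - f x - absLin F phi f x (a *: (v - x))
    <= a ^+ 2 / 2 * curvature_constant F phi f C.
Proof.
move=> ub_curv Cx Cv a01; have a_gt0 : 0 < a by case/andP: a01.
set r := _ - absLin _ _ _ _ _.
have r_curv : curv_set F phi f C (2 / a ^+ 2 * `|r|) by exists x, v, a.
have r_le : 2 / a ^+ 2 * `|r| <= curvature_constant F phi f C.
  by apply: sup_upper_bound => //; split => //; exists (2 / a ^+ 2 * `|r|).
apply: le_trans (ler_norm r) _.
by rewrite -invf_div ler_pdivlMl // divr_gt0 // exprn_gt0.
Qed.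

Theorem mainTheorem3 (R : realType) (n s : nat)
  (F : 'rV[R]_(n + s + s) -> 'rV[R]_s) (phi : 'rV[R]_(n + s) -> R)
  (f : 'rV[R]_n -> R) (C : set 'rV[R]_n) (alpha eps : R) (xt vt : 'rV[R]_n) :
  abs_smooth_form f F phi ->
  C !=set0 -> compact C -> convex_set_rV C -> convex_on f C ->
  has_ubound (curv_set F phi f C) ->
  0 < alpha <= 1 -> C xt -> 0 <= eps -> C vt ->
  absLin F phi f xt (alpha *: (vt - xt))
    <= inf [set absLin F phi f xt (alpha *: (w - xt)) | w in C]
       + 2^-1 * eps * alpha ^+ 2 * curvature_constant F phi f C ->
  f (xt + alpha *: (vt - xt))
    <= f xt
       - alpha * sup [set - absLin F phi f xt (alpha *: (v - xt)) / alpha | v in C]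
       + alpha ^+ 2 / 2 * curvature_constant F phi f C * (1 + eps).
Proof.
move=> _ _ _ _ _ ub_curv alpha01 Cxt _ Cvt vt_near_min.
have alpha_gt0 : 0 < alpha by case/andP: alpha01.
have remainder_le := absLin_remainder_le_curvature ub_curv Cxt Cvt alpha01.
rewrite (inf_image_scaledE _ _ _ alpha_gt0) in vt_near_min.
have descent (fnext fx d g Cf : R) :
    fnext - fx - d <= alpha ^+ 2 / 2 * Cf ->
    d <= - (alpha * g) + 2^-1 * eps * alpha ^+ 2 * Cf ->
  fnext <= fx - alpha * g + alpha ^+ 2 / 2 * Cf * (1 + eps).
  by move=> *; lra.
exact: descent remainder_le vt_near_min.
Qed.
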